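(* In the setting of the adaptive implicit-explicit iteration described in the context, let $a>0$ and suppose the step size satisfies $\eta^{-1}\ge\|\bm T\|+2a$. Then for every $k\ge0$, $f(\bm d_k)-f(\bm d_{k+1})\ge a\|\bm d_{k+1}-\bm d_k\|_2^2$ and $L(\bm d_k,\beta_k)-L(\bm d_{k+1},\beta_{k+1})\ge a\|\bm d_{k+1}-\bm d_k\|_2^2$.
   Context: Let $n\ge1$, $r>0$, $\bm g\in\mathbb R^n$ with $\bm g\neq0$, and $\bm H=\bm D+\bm T\in\mathbb R^{n\times n}$, where $\bm D$ is diagonal with nonnegative diagonal entries $D_{i,i}$ and $\bm T$ is symmetric; $\|\bm T\|$ is the spectral norm. Let $f(\bm d)=\bm g^\top\bm d+\frac12\bm d^\top\bm H\bm d$ and $L(\bm d,\beta)=f(\bm d)+\frac{\beta^2}{2}(\|\bm d\|_2^2-r^2)$. Adaptive implicit-explicit iteration with step size $\eta>0$: set $\bm d_0=-r\bm g/\|\bm g\|_2$ and $\lambda_0=0$. For $k=0,1,2,\dots$: let $\bm b_k=\bm d_k-\eta(\bm g+\bm T\bm d_k)$ and $\phi_k(\lambda)=\sum_{i=1}^n\big([\bm b_k]_i/(1+\eta(D_{i,i}+\lambda))\big)^2$; set $\lambda_{k+1}=0$ if $\phi_k(0)\le r^2$, and otherwise let $\lambda_{k+1}>0$ be the solution of $\phi_k(\lambda)=r^2$; then $\bm d_{k+1}=(\bm I+\eta(\bm D+\lambda_{k+1}\bm I))^{-1}\bm b_k$. Finally $\beta_k=\sqrt{\lambda_k}$. *)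

From mathcomp Require Import all_boot all_order all_algebra.
From mathcomp Require Import classical_sets reals.
Set Implicit Arguments. Unset Strict Implicit. Unset Printing Implicit Defensive.
Import Order.TTheory GRing.Theory Num.Theory.
Local Open Scope ring_scope.

Section Defs.
Variables (R : realType) (n : nat).

Definition dotv (u v : 'cV[R]_n) : R := \sum_(i < n) u i 0 * v i 0.
Definition norm2 (u : 'cV[R]_n) : R := Num.sqrt (dotv u u).

Definition specnorm (T : 'M[R]_n) : R :=
  sup [set norm2 (T *m x) | x in [set x : 'cV[R]_n | norm2 x <= 1]].

Definition fobj (g : 'cV[R]_n) (H : 'M[R]_n) (d : 'cV[R]_n) : R :=
  dotv g d + 2^-1 * dotv d (H *m d).

Definition Lag (g : 'cV[R]_n) (H : 'M[R]_n) (r : R) (d : 'cV[R]_n) (beta : R) : R :=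
  fobj g H d + beta ^+ 2 / 2 * (norm2 d ^+ 2 - r ^+ 2).

Definition bvec (g : 'cV[R]_n) (T : 'M[R]_n) (eta : R) (d : 'cV[R]_n) : 'cV[R]_n :=
  d - eta *: (g + T *m d).

Definition phi (D : 'M[R]_n) (eta : R) (b : 'cV[R]_n) (lam : R) : R :=
  \sum_(i < n) (b i 0 / (1 + eta * (D i i + lam))) ^+ 2.

Definition aie_iteration (g : 'cV[R]_n) (D T : 'M[R]_n) (r eta : R)
    (d : nat -> 'cV[R]_n) (lam : nat -> R) : Prop :=
  d 0%N = - (r / norm2 g) *: g /\ lam 0%N = 0 /\
  forall k : nat,
    let b := bvec g T eta (d k) in
    (phi D eta b 0 <= r ^+ 2 -> lam k.+1 = 0) /\
    (r ^+ 2 < phi D eta b 0 -> 0 < lam k.+1 /\ phi D eta b (lam k.+1) = r ^+ 2) /\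
    d k.+1 = invmx (1%:M + eta *: (D + (lam k.+1)%:M)) *m b.

End Defs.

From mathcomp Require Import all_boot all_order all_algebra.
From mathcomp Require Import classical_sets reals.
From mathcomp Require Import lra ring.
Import Order.TTheory GRing.Theory Num.Theory.
Local Open Scope ring_scope.
Set Implicit Arguments. Unset Strict Implicit.

(* Write x = d_k, y = d_(k+1), w = y - x and lam = lambda_(k+1).  Testing the
   step (I + eta (D + lam I)) y = x - eta (g + T x) against w gives
     eta (f x - f y) = |w|^2 + eta/2 w'Dw - eta/2 w'Tw + eta lam y'w.
   The D-term is nonnegative, w'Tw <= |T| |w|^2, and lam y'w >= 0 because
   every iterate lies in the ball of radius r while lam |y|^2 = lam r^2
   (complementarity).  Hence f x - f y >= (1/eta - |T|/2) |w|^2 >= a |w|^2.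
   Complementarity also gives L(d_k, beta_k) = f(d_k), so the Lagrangian
   decreases by the same amount. *)

Section DotProduct.
Variables (R : realType) (n : nat).
Implicit Types (u v w : 'cV[R]_n) (A : 'M[R]_n).

Lemma dotvC u v : dotv u v = dotv v u.
Proof. by apply: eq_bigr => i _; rewrite mulrC. Qed.

Lemma dotvDl u w v : dotv (u + w) v = dotv u v + dotv w v.
Proof. by rewrite /dotv -big_split; apply: eq_bigr => i _; rewrite mxE mulrDl. Qed.

Lemma dotvDr u w v : dotv v (u + w) = dotv v u + dotv v w.
Proof. by rewrite dotvC dotvDl !(dotvC v). Qed.

Lemma dotvZl c u v : dotv (c *: u) v = c * dotv u v.
Proof. by rewrite /dotv mulr_sumr; apply: eq_bigr => i _; rewrite mxE mulrA. Qed.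

Lemma dotvZr c u v : dotv v (c *: u) = c * dotv v u.
Proof. by rewrite dotvC dotvZl dotvC. Qed.

Lemma dotvNl u v : dotv (- u) v = - dotv u v.
Proof. by rewrite -scaleN1r dotvZl mulN1r. Qed.

Lemma dotvNr u v : dotv v (- u) = - dotv v u.
Proof. by rewrite dotvC dotvNl dotvC. Qed.

Lemma dotvBl u w v : dotv (u - w) v = dotv u v - dotv w v.
Proof. by rewrite dotvDl dotvNl. Qed.

Lemma dotvBr u w v : dotv v (u - w) = dotv v u - dotv v w.
Proof. by rewrite dotvDr dotvNr. Qed.

Lemma dotv0l v : dotv 0 v = 0.
Proof. by rewrite /dotv big1 // => i _; rewrite mxE mul0r. Qed.

Lemma dotv0r v : dotv v 0 = 0.
Proof. by rewrite dotvC dotv0l. Qed.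

Lemma dotv_mulmx u A v : dotv u (A *m v) = dotv (A^T *m u) v.
Proof.
rewrite /dotv.
under eq_bigr => i _ do rewrite mxE mulr_sumr.
under [in RHS]eq_bigr => i _ do rewrite mxE mulr_suml.
rewrite exchange_big /=; apply: eq_bigr => i _; apply: eq_bigr => j _.
by rewrite mxE mulrCA mulrA.
Qed.

Lemma dotv_mulmx_sym u A v : A^T = A -> dotv u (A *m v) = dotv v (A *m u).
Proof. by move=> symA; rewrite dotv_mulmx symA dotvC. Qed.

Lemma dotv_ge0 u : 0 <= dotv u u.
Proof. by apply: sumr_ge0 => i _; rewrite -expr2 sqr_ge0. Qed.

Lemma dotv_eq0 u : (dotv u u == 0) = (u == 0).
Proof.
apply/idP/eqP => [|->]; last by rewrite dotv0l.
rewrite psumr_eq0 => [/allP u0|i _]; last by rewrite -expr2 sqr_ge0.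
apply/matrixP => i j; rewrite (ord1 j) mxE.
by apply/eqP; have := u0 i (mem_index_enum _); rewrite /= mulf_eq0 orbb.
Qed.

Lemma coord_sqr_le_dotv u i : u i 0 ^+ 2 <= dotv u u.
Proof.
rewrite /dotv (bigD1 i) //= -expr2 lerDl.
by apply: sumr_ge0 => j _; rewrite -expr2 sqr_ge0.
Qed.

Lemma norm2_ge0 u : 0 <= norm2 u.
Proof. exact: sqrtr_ge0. Qed.

Lemma norm2_sqr u : norm2 u ^+ 2 = dotv u u.
Proof. by rewrite sqr_sqrtr // dotv_ge0. Qed.

Lemma norm2_eq0 u : (norm2 u == 0) = (u == 0).
Proof. by rewrite -dotv_eq0 -norm2_sqr sqrf_eq0. Qed.

Lemma norm2_0 : norm2 (0 : 'cV[R]_n) = 0.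
Proof. by rewrite /norm2 dotv0l sqrtr0. Qed.

Lemma norm2Z c u : norm2 (c *: u) = `|c| * norm2 u.
Proof.
by rewrite /norm2 dotvZl dotvZr mulrA -expr2 sqrtrM ?sqr_ge0 // sqrtr_sqr.
Qed.

End DotProduct.

Section SpectralNorm.
Variables (R : realType) (n : nat).
Implicit Types (x : 'cV[R]_n) (T : 'M[R]_n).

Lemma has_sup_specnorm T :
  has_sup [set norm2 (T *m x) | x in [set x : 'cV[R]_n | norm2 x <= 1]].
Proof.
split; first by exists (norm2 (T *m 0)), 0; rewrite //= norm2_0.
exists (Num.sqrt (\sum_(i < n) (\sum_(j < n) `|T i j|) ^+ 2) : R).
move=> _ [x /= x_le1 <-].
rewrite /norm2 ler_sqrt; last by apply: sumr_ge0 => i _; rewrite sqr_ge0.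
have xx_le1 : dotv x x <= 1.
  by rewrite -norm2_sqr -(expr1n R 2) lerXn2r ?nnegrE ?norm2_ge0.
have coord_le1 j : `|x j 0| <= 1.
  have := le_trans (coord_sqr_le_dotv x j) xx_le1.
  by rewrite ler_norml => sqr_le1; apply/andP; split; nra.
apply: ler_sum => i _; rewrite -expr2.
rewrite -real_normK ?num_real // lerXn2r ?nnegrE //; first by apply: sumr_ge0.
rewrite mxE; apply: le_trans (ler_norm_sum _ _ _) _.
by apply: ler_sum => j _; rewrite normrM ler_piMr.
Qed.

Lemma specnorm_ge0 T : 0 <= specnorm T.
Proof.
apply: (sup_upper_bound (has_sup_specnorm T)).
by exists 0; rewrite /= ?mulmx0 norm2_0 ?ler01.
Qed.

Lemma norm2_mulmx_le T x : norm2 (T *m x) <= specnorm T * norm2 x.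
Proof.
have [->|x_neq0] := eqVneq x 0; first by rewrite mulmx0 norm2_0 mulr0.
have x_gt0 : 0 < norm2 x by rewrite lt_def norm2_eq0 x_neq0 norm2_ge0.
set y := (norm2 x)^-1 *: x.
have y_le1 : norm2 y <= 1.
  by rewrite norm2Z ger0_norm ?invr_ge0 ?norm2_ge0 // mulVf ?gt_eqF.
have := sup_upper_bound (has_sup_specnorm T) (ex_intro2 _ _ y y_le1 erefl).
rewrite /y -scalemxAr norm2Z ger0_norm ?invr_ge0 ?norm2_ge0 // => Ty_le.
by rewrite -ler_pdivrMr // mulrC.
Qed.

Lemma dotv_mulmx_le_specnorm T x : dotv x (T *m x) <= specnorm T * dotv x x.
Proof.
set S := specnorm T; set z := T *m x.
have z_le : norm2 z <= S * norm2 x := norm2_mulmx_le T x.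
have [S0|S_neq0] := eqVneq S 0.
  suff /eqP -> : z == 0 by rewrite dotv0r S0 mul0r.
  by rewrite -norm2_eq0 eq_le norm2_ge0 andbT -(mul0r (norm2 x)) -S0.
have S_gt0 : 0 < S by rewrite lt_def S_neq0 specnorm_ge0.
(* Expand 0 <= |S x - z|^2 and use |z|^2 <= S^2 |x|^2 (no Cauchy-Schwarz needed). *)
have := dotv_ge0 (S *: x - z).
rewrite dotvBl !dotvBr !dotvZl !dotvZr (dotvC z x) => sq_ge0.
have zz_le : dotv z z <= S * S * dotv x x.
  by rewrite -!norm2_sqr; have := norm2_ge0 z; have := norm2_ge0 x; nra.
rewrite -(ler_pM2l S_gt0); lra.
Qed.

End SpectralNorm.

Section QuadraticDescent.
Variables (R : realType) (n : nat).
Implicit Types (x y w g : 'cV[R]_n) (D T : 'M[R]_n).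

Lemma fobjD g D T x w : D^T = D -> T^T = T ->
  fobj g (D + T) (x + w) = fobj g (D + T) x + dotv g w + dotv x (D *m w)
    + dotv x (T *m w) + 2^-1 * (dotv w (D *m w) + dotv w (T *m w)).
Proof.
move=> symD symT; rewrite /fobj !mulmxDl !mulmxDr !dotvDl !dotvDr.
rewrite (dotv_mulmx_sym w x symD) (dotv_mulmx_sym w x symT); lra.
Qed.

Lemma shifted_step_mulmx D eta lam y :
  (1%:M + eta *: (D + lam%:M)) *m y = y + eta *: (D *m y + lam *: y).
Proof. by rewrite mulmxDl mul1mx -scalemxAl mulmxDl mul_scalar_mx. Qed.

Lemma fobj_step_decrease g D T (eta lam : R) x y :
  D^T = D -> T^T = T ->
  (1%:M + eta *: (D + lam%:M)) *m y = bvec g T eta x ->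
  eta * (fobj g (D + T) x - fobj g (D + T) y) =
    dotv (y - x) (y - x) + eta / 2 * dotv (y - x) (D *m (y - x))
    - eta / 2 * dotv (y - x) (T *m (y - x)) + eta * (lam * dotv y (y - x)).
Proof.
move=> symD symT; rewrite shifted_step_mulmx /bvec.
have [w ->] : exists w, y = x + w by exists (y - x); rewrite addrC subrK.
rewrite [x + w - x]addrC addKr => step.
have : w + eta *: (D *m (x + w) + lam *: (x + w)) + eta *: (g + T *m x) = 0.
  by apply/(addrI x); rewrite addr0 !addrA step subrK.
move/(congr1 (dotv w)); rewrite dotv0r !dotvDr !dotvZr !mulmxDr !dotvDr !dotvZr !dotvDr.
rewrite (dotv_mulmx_sym w x symD) (dotv_mulmx_sym w x symT) (dotvC w g) (dotvC w x).
move=> step_against_w.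
rewrite fobjD // !dotvDl; lra.
Qed.

(* AM-GM: 2 lam y'x <= lam (|y|^2 + |x|^2). *)
Lemma complementary_multiplier_ge0 x y (lam r : R) :
  0 <= lam -> lam * (dotv y y - r ^+ 2) = 0 -> dotv x x <= r ^+ 2 ->
  0 <= lam * dotv y (y - x).
Proof.
move=> lam_ge0 compl feas; rewrite dotvBr.
have := dotv_ge0 (y - x); rewrite dotvBr !dotvBl (dotvC x y) => sq_ge0.
have := mulr_ge0 lam_ge0 sq_ge0; have := mulr_ge0 lam_ge0 (eqbRL (subr_ge0 _ _) feas).
lra.
Qed.

Lemma fobj_step_descent g D T (eta lam a r : R) x y :
  D^T = D -> T^T = T -> (forall v, 0 <= dotv v (D *m v)) ->
  0 < eta -> 0 < a -> specnorm T + 2 * a <= eta^-1 ->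
  0 <= lam -> lam * (dotv y y - r ^+ 2) = 0 -> dotv x x <= r ^+ 2 ->
  (1%:M + eta *: (D + lam%:M)) *m y = bvec g T eta x ->
  a * dotv (y - x) (y - x) <= fobj g (D + T) x - fobj g (D + T) y.
Proof.
move=> symD symT D_psd eta_gt0 a_gt0 eta_small lam_ge0 compl feas step.
rewrite -(ler_pM2l eta_gt0) (fobj_step_decrease symD symT step).
have := complementary_multiplier_ge0 lam_ge0 compl feas.
set w := y - x.
have := dotv_mulmx_le_specnorm T w; have := D_psd w.
have := dotv_ge0 w; have := specnorm_ge0 T.
have : eta * (specnorm T + 2 * a) <= 1.
  by rewrite -[leRHS](mulfV (lt0r_neq0 eta_gt0)) ler_pM2l.
nra.
Qed.

Lemma Lag_complementary g H r d lam :
  0 <= lam -> lam * (dotv d d - r ^+ 2) = 0 ->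
  Lag g H r d (Num.sqrt lam) = fobj g H d.
Proof.
by move=> lam_ge0 compl; rewrite /Lag sqr_sqrtr // norm2_sqr mulrAC compl mul0r addr0.
Qed.

End QuadraticDescent.

Section DiagonalSystem.
Variables (F : fieldType) (n : nat).

Lemma diag_mx_unitmx (e : 'rV[F]_n) : (forall i, e 0 i != 0) -> diag_mx e \in unitmx.
Proof. by move=> e_neq0; rewrite unitmxE det_diag unitfE; apply/prodf_neq0. Qed.

Lemma invmx_diag_mulmx (e : 'rV[F]_n) (b : 'cV[F]_n) i :
  (forall i, e 0 i != 0) -> (invmx (diag_mx e) *m b) i 0 = b i 0 / e 0 i.
Proof.
move=> e_neq0; have := mulKVmx (diag_mx_unitmx e_neq0) b.
move=> /(congr1 (fun v : 'cV_n => v i 0)); rewrite mul_diag_mx mxE => <-.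
by rewrite mulrAC mulfV ?mul1r.
Qed.

End DiagonalSystem.

Section DiagonalMatrix.
Variables (R : realType) (n : nat) (D : 'M[R]_n).
Hypothesis D_diag : forall i j : 'I_n, i != j -> D i j = 0.

Lemma diag_mx_diagonal : D = diag_mx (\row_i D i i).
Proof.
apply/matrixP => i j; rewrite !mxE.
by case: eqVneq => [->|/D_diag ->]; rewrite ?mulr1n ?mulr0n.
Qed.

Lemma trmx_diagonal : D^T = D.
Proof. by rewrite diag_mx_diagonal tr_diag_mx. Qed.

Lemma diagonal_psd : (forall i, 0 <= D i i) -> forall v, 0 <= dotv v (D *m v).
Proof.
move=> D_ge0 v; rewrite diag_mx_diagonal mul_diag_mx; apply: sumr_ge0 => i _.
by rewrite !mxE mulrCA mulr_ge0 // -expr2 sqr_ge0.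
Qed.

Lemma shifted_diagonal (eta lam : R) :
  1%:M + eta *: (D + lam%:M) = diag_mx (\row_i (1 + eta * (D i i + lam))).
Proof.
apply/matrixP => i j; rewrite diag_mx_diagonal !mxE.
by case: eqVneq => [->|_]; rewrite ?eqxx ?mulr1n ?mulr0n ?addr0 ?mulr0 ?addr0.
Qed.

End DiagonalMatrix.

Section Iteration.
Variables (R : realType) (n : nat) (r eta a : R) (g : 'cV[R]_n) (D T : 'M[R]_n).
Variables (d : nat -> 'cV[R]_n) (lam : nat -> R).
Hypothesis g_neq0 : g != 0.
Hypothesis D_diag : forall i j : 'I_n, i != j -> D i j = 0.
Hypothesis D_ge0 : forall i : 'I_n, 0 <= D i i.
Hypothesis eta_gt0 : 0 < eta.
Hypothesis T_sym : T^T = T.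
Hypothesis a_gt0 : 0 < a.
Hypothesis eta_small : specnorm T + 2 * a <= eta^-1.
Hypothesis iter : aie_iteration g D T r eta d lam.

Lemma aie_lam_ge0 k : 0 <= lam k.
Proof.
have [_ [lam0 step]] := iter; case: k => [|k]; first by rewrite lam0.
have [lam_eq0 [lam_pos _]] := step k.
case: (lerP (phi D eta (bvec g T eta (d k)) 0) (r ^+ 2)) => [/lam_eq0 -> //|].
by case/lam_pos => /ltW.
Qed.

Let shift_neq0 k i : 1 + eta * (D i i + lam k) != 0.
Proof.
apply: lt0r_neq0; have := mulr_ge0 (ltW eta_gt0) (addr_ge0 (D_ge0 i) (aie_lam_ge0 k)).
lra.
Qed.

Lemma aie_step k :
  (1%:M + eta *: (D + (lam k.+1)%:M)) *m d k.+1 = bvec g T eta (d k).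
Proof.
have [_ [_ step]] := iter; have [_ [_ ->]] := step k.
rewrite shifted_diagonal // mulKVmx // diag_mx_unitmx // => i.
by rewrite mxE shift_neq0.
Qed.

Lemma aie_dotv_phi k :
  dotv (d k.+1) (d k.+1) = phi D eta (bvec g T eta (d k)) (lam k.+1).
Proof.
have [_ [_ step]] := iter; have [_ [_ ->]] := step k.
rewrite shifted_diagonal // /dotv /phi; apply: eq_bigr => i _.
by rewrite invmx_diag_mulmx => [|j]; rewrite ?expr2 !mxE ?shift_neq0.
Qed.

Lemma aie_feasible_complementary k :
  dotv (d k) (d k) <= r ^+ 2 /\ lam k * (dotv (d k) (d k) - r ^+ 2) = 0.
Proof.
have [d0 [lam0 step]] := iter; case: k => [|k].
  rewrite lam0 mul0r d0 dotvZl dotvZr -norm2_sqr.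
  have ng_neq0 : norm2 g != 0 by rewrite norm2_eq0.
  by split=> //; rewrite mulrA -expr2 sqrrN expr_div_n divfK ?sqrf_eq0.
have [lam_eq0 [lam_pos _]] := step k; rewrite aie_dotv_phi.
case: (lerP (phi D eta (bvec g T eta (d k)) 0) (r ^+ 2)) => [phi0_le|/lam_pos [_ ->]].
  by rewrite (lam_eq0 phi0_le) mul0r.
by rewrite subrr mulr0.
Qed.

Lemma aie_fobj_descent k :
  a * dotv (d k.+1 - d k) (d k.+1 - d k)
    <= fobj g (D + T) (d k) - fobj g (D + T) (d k.+1).
Proof.
have [feas_k _] := aie_feasible_complementary k.
have [_ compl_k1] := aie_feasible_complementary k.+1.
exact: fobj_step_descent (trmx_diagonal D_diag) T_sym (diagonal_psd D_diag D_ge0)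
  eta_gt0 a_gt0 eta_small (aie_lam_ge0 k.+1) compl_k1 feas_k (aie_step k).
Qed.

End Iteration.

Unset Implicit Arguments. Set Strict Implicit.
Theorem mainTheorem4 (R : realType) (n : nat) (r : R) (g : 'cV[R]_n)
    (D T : 'M[R]_n) (eta a : R) (d : nat -> 'cV[R]_n) (lam : nat -> R) :
  (0 < n)%N -> 0 < r -> g != 0 ->
  (forall i j : 'I_n, i != j -> D i j = 0) ->
  (forall i : 'I_n, 0 <= D i i) ->
  T^T = T ->
  0 < eta -> 0 < a ->
  specnorm T + 2 * a <= eta^-1 ->
  aie_iteration g D T r eta d lam ->
  forall k : nat,
    fobj g (D + T) (d k) - fobj g (D + T) (d k.+1)
      >= a * norm2 (d k.+1 - d k) ^+ 2 /\
    Lag g (D + T) r (d k) (Num.sqrt (lam k))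
      - Lag g (D + T) r (d k.+1) (Num.sqrt (lam k.+1))
      >= a * norm2 (d k.+1 - d k) ^+ 2.
Proof.
move=> _ _ g_neq0 D_diag D_ge0 T_sym eta_gt0 a_gt0 eta_small iter k.
have compl j := (aie_feasible_complementary g_neq0 D_diag D_ge0 eta_gt0 iter j).2.
have lam_ge0 := aie_lam_ge0 iter.
have descent := aie_fobj_descent g_neq0 D_diag D_ge0 eta_gt0 T_sym a_gt0 eta_small iter k.
by rewrite norm2_sqr !Lag_complementary.
Qed.
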